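(* In the private bug bounty model described in the context, if $(\boldsymbol v^*,\boldsymbol v_a^*,\boldsymbol q_a^* )$ is a solution to the designer's problem, then there exists another solution $(\boldsymbol v^{**},\boldsymbol v_a^{**},\boldsymbol q_a^{**})$ such that $\boldsymbol v_a^{**}=(v_a^{1**},0,\dots,0)$.
   Context: Private bug bounty model. There are $L$ potential organic bugs $l=1,\dots,L$; bug $l$ exists with probability $\mu^l\in(0,1]$, independently across bugs, has complexity $q^l\in(0,1]$, and the designer values finding it at $w^l\in[0,\infty)$. There are $n$ risk-neutral agents with private search costs $c_i$ drawn i.i.d. from a distribution $F$ with support $[\underline c,\overline c]$ ($-\infty\le\underline c<\overline c\le\infty$, $\overline c>0$), $F$ continuous with full support, finite density $f$, and $F/f$ non-decreasing. The designer has budget $\overline v>0$, sets prizes $\boldsymbol v=(v^l)_l$, $v^l\ge0$, for organic bugs, and inserts $K$ artificial bugs (existing with certainty, of no value to the designer) with prizes $\boldsymbol v_a=(v_a^k)_k$, $v_a^k\ge0$, and complexities $\boldsymbol q_a=(q_a^k)_k$, $q_a^k\in[0,1]$. Each agent chooses whether to search at cost $c_i$; a searching agent finds each existing bug of complexity $q$ with probability $q$, independently across agents and bugs; the prize of each found bug is paid to one of its finders chosen uniformly at random. $\Phi(\hat c;q)$ is the probability that a searching agent wins the prize of an existing bug of complexity $q$ when each other agent searches iff his/her cost is at most $\hat c$; $\Psi(\hat c;\boldsymbol v,\boldsymbol v_a,\boldsymbol q_a)=\sum_l v^l\mu^l\Phi(\hat c;q^l)+\sum_k v_a^k\Phi(\hat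 c;q_a^k)$. The equilibrium threshold $c^*=c^*(\boldsymbol v,\boldsymbol v_a,\boldsymbol q_a)$ is the symmetric Bayes–Nash equilibrium threshold: $c^*=\underline c$ if $\Psi(\underline c)\le\underline c$, $c^*=\overline c$ if $\Psi(\overline c)\ge\overline c$, and otherwise the unique solution of $\hat c=\Psi(\hat c)$. Let $P(\hat c;q)=1-(1-qF(\hat c))^n$. The designer's problem is $$\max_{\boldsymbol v,\boldsymbol v_a,\boldsymbol q_a}\ \sum_l (w^l-v^l)\mu^lP(c^*;q^l)-\sum_k v_a^kP(c^*;q_a^k)\quad\text{s.t.}\quad \sum_l v^l+\sum_k v_a^k\le\overline v,\ v^l\ge0,\ v_a^k\ge0,\ q_a^k\in[0,1].$$ *)

From Stdlib Require Import Reals Lra ClassicalEpsilon.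
From Coquelicot Require Import Coquelicot.
Open Scope R_scope.

(* sumR m g = g 0 + ... + g (m-1)  (indices are 0-based: bug l of the paper is index l-1) *)
Fixpoint sumR (m : nat) (g : nat -> R) : R :=
  match m with
  | O => 0
  | S m' => sumR m' g + g m'
  end.

Definition cost_cdf (cl ch : Rbar) (F f : R -> R) : Prop :=
  Rbar_lt cl ch /\ Rbar_lt (Finite 0) ch /\
  (forall x y, x <= y -> F x <= F y) /\
  (forall x, continuous F x) /\
  is_lim F m_infty 0 /\ is_lim F p_infty 1 /\
  (forall x, Rbar_le (Finite x) cl -> F x = 0) /\
  (forall x, Rbar_le ch (Finite x) -> F x = 1) /\
  (* full support: strictly increasing on the support *)
  (forall x y, Rbar_le cl (Finite x) -> x < y -> Rbar_le (Finite y) ch -> F x < F y) /\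
  (forall x, Rbar_lt cl (Finite x) -> Rbar_lt (Finite x) ch ->
       is_derive F x (f x) /\ 0 < f x) /\
  (forall x y, Rbar_lt cl (Finite x) -> x <= y -> Rbar_lt (Finite y) ch ->
       F x / f x <= F y / f y).

(* Phi(c; q): probability that a searching agent wins the prize of an existing
   bug of complexity q when each of the n-1 other agents searches iff cost <= c.
   He finds it w.p. q; the number k of other finders is Binomial(n-1, q F(c));
   he wins with prob. 1/(k+1). *)
Definition Phi (n : nat) (F : R -> R) (c q : R) : R :=
  let p := q * F c in
  q * sumR n (fun k => Binomial.C (n - 1) k * p ^ k * (1 - p) ^ (n - 1 - k) / INR (k + 1)).

Definition Pfind (n : nat) (F : R -> R) (c q : R) : R :=
  1 - (1 - q * F c) ^ n.

Definition Psi (n L K : nat) (F : R -> R) (mu q : nat -> R)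
    (v va qa : nat -> R) (c : R) : R :=
  sumR L (fun l => v l * mu l * Phi n F c (q l)) + sumR K (fun k => va k * Phi n F c (qa k)).

Definition is_threshold (cl ch : Rbar) (Ps : R -> R) (c : R) : Prop :=
  let low := exists a, cl = Finite a /\ Ps a <= a in
  let high := exists b, ch = Finite b /\ b <= Ps b in
  (cl = Finite c /\ Ps c <= c) \/
  (~ low /\ ch = Finite c /\ c <= Ps c) \/
  (~ low /\ ~ high /\ Rbar_lt cl (Finite c) /\ Rbar_lt (Finite c) ch /\ Ps c = c).

(* the equilibrium threshold c* (the paper's definition singles out one value) *)
Definition cstar (n L K : nat) (cl ch : Rbar) (F : R -> R) (mu q : nat -> R)
    (v va qa : nat -> R) : R :=
  epsilon (inhabits 0) (is_threshold cl ch (Psi n L K F mu q v va qa)).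

Definition feasible (L K : nat) (vbar : R) (v va qa : nat -> R) : Prop :=
  sumR L v + sumR K va <= vbar /\
  (forall l, (l < L)%nat -> 0 <= v l) /\
  (forall k, (k < K)%nat -> 0 <= va k /\ 0 <= qa k <= 1).

Definition objective (n L K : nat) (cl ch : Rbar) (F : R -> R) (mu q w : nat -> R)
    (v va qa : nat -> R) : R :=
  let c := cstar n L K cl ch F mu q v va qa in
  sumR L (fun l => (w l - v l) * mu l * Pfind n F c (q l))
  - sumR K (fun k => va k * Pfind n F c (qa k)).

Definition is_solution (n L K : nat) (cl ch : Rbar) (F : R -> R) (mu q w : nat -> R)
    (vbar : R) (v va qa : nat -> R) : Prop :=
  feasible L K vbar v va qa /\
  forall v' va' qa', feasible L K vbar v' va' qa' ->
    objective n L K cl ch F mu q w v' va' qa' <= objective n L K cl ch F mu q w v va qa.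

From Stdlib Require Import Reals Lra Lia ClassicalEpsilon.
From Coquelicot Require Import Coquelicot.
Open Scope R_scope.

(* Both the equilibrium condition and the designer's expected payment for artificial
   bugs depend on the artificial prizes only through A(c) = Σ_k v_a^k Φ(c; q_a^k) at
   the threshold: Ψ is its organic part plus A, and P(c; q) = n F(c) Φ(c; q).  Since
   Ψ is continuous, nonnegative and decreasing, the threshold exists (intermediate
   value theorem) and is pinned down by the value of Ψ there.  Replacing all
   artificial bugs by a single one of complexity 1 with prize A(c) / Φ(c; 1), c the
   threshold, thus keeps the threshold and the objective, and since
   Φ(c; q) <= Φ(c; 1) it costs no more budget. *)

Lemma sumR_ext m g h :
  (forall k, (k < m)%nat -> g k = h k) -> sumR m g = sumR m h.
Proof.
  induction m as [|m IH]; intros Hgh; cbn [sumR]; [reflexivity|].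
  rewrite IH by (intros; apply Hgh; lia). rewrite Hgh by lia. reflexivity.
Qed.

Lemma sumR_le m g h :
  (forall k, (k < m)%nat -> g k <= h k) -> sumR m g <= sumR m h.
Proof.
  induction m as [|m IH]; intros Hgh; cbn [sumR]; [lra|].
  apply Rplus_le_compat; [apply IH; intros; apply Hgh|apply Hgh]; lia.
Qed.

Lemma sumR_nonneg m g : (forall k, (k < m)%nat -> 0 <= g k) -> 0 <= sumR m g.
Proof.
  induction m as [|m IH]; intros Hg; cbn [sumR]; [lra|].
  apply Rplus_le_le_0_compat; [apply IH; intros; apply Hg|apply Hg]; lia.
Qed.

Lemma sumR_scal_l m a g : sumR m (fun k => a * g k) = a * sumR m g.
Proof. induction m as [|m IH]; cbn [sumR]; [ring|]. rewrite IH. ring. Qed.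

Lemma sumR_const m c : sumR m (fun _ => c) = INR m * c.
Proof. induction m as [|m IH]; cbn [sumR]; [simpl; ring|]. rewrite IH, S_INR. ring. Qed.

Lemma sumR_succ_l m g : sumR (S m) g = g O + sumR m (fun k => g (S k)).
Proof. induction m as [|m IH]; cbn [sumR] in *; [ring|]. rewrite IH. ring. Qed.

Lemma sumR_sum_f_R0 m g : sumR (S m) g = sum_f_R0 g m.
Proof. induction m as [|m IH]; cbn [sumR sum_f_R0] in *; [ring|]. rewrite IH. ring. Qed.

Definition first_only (s : R) (k : nat) : R := if (k =? 0)%nat then s else 0.

Lemma sumR_first_only_mul m s g :
  (1 <= m)%nat -> sumR m (fun k => first_only s k * g k) = s * g O.
Proof.
  intros Hm. destruct m as [|m]; [lia|].
  rewrite sumR_succ_l, (sumR_ext m _ (fun _ => 0)), sumR_const.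
  - unfold first_only. simpl. ring.
  - intros k _. unfold first_only. simpl. ring.
Qed.

Definition geom_sum (n : nat) (x : R) : R := sumR n (fun j => (1 - x) ^ j).

Lemma geom_sum_mul n x : x * geom_sum n x = 1 - (1 - x) ^ n.
Proof.
  unfold geom_sum. induction n as [|n IH]; cbn [sumR pow]; [ring|].
  rewrite Rmult_plus_distr_l, IH. ring.
Qed.

Lemma geom_sum_0 n : geom_sum n 0 = INR n.
Proof.
  unfold geom_sum. rewrite (sumR_ext n _ (fun _ => 1)), sumR_const; [ring|].
  intros k _. rewrite Rminus_0_r. apply pow1.
Qed.

Lemma geom_sum_ge1 n x : (1 <= n)%nat -> 0 <= x <= 1 -> 1 <= geom_sum n x.
Proof.
  intros Hn Hx. destruct n as [|n]; [lia|].
  unfold geom_sum. rewrite sumR_succ_l.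
  assert (0 <= sumR n (fun k => (1 - x) ^ S k)) by (apply sumR_nonneg; intros; apply pow_le; lra).
  simpl (_ ^ 0). lra.
Qed.

Lemma geom_sum_decr n x y : 0 <= x <= y -> y <= 1 -> geom_sum n y <= geom_sum n x.
Proof. intros Hxy Hy. apply sumR_le. intros k _. apply pow_incr. lra. Qed.

Lemma C_succ_succ m k :
  (k <= m)%nat -> INR (S m) * Binomial.C m k / INR (S k) = Binomial.C (S m) (S k).
Proof.
  intros Hk. unfold Binomial.C. replace (S m - S k)%nat with (m - k)%nat by lia.
  rewrite !fact_simpl, !mult_INR.
  assert (INR (Factorial.fact k) <> 0) by apply INR_fact_neq_0.
  assert (INR (Factorial.fact (m - k)) <> 0) by apply INR_fact_neq_0.
  assert (INR (S k) <> 0) by (apply not_0_INR; lia).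
  field. auto.
Qed.

Lemma binomial_succ_tail m p :
  sumR (S m) (fun k => Binomial.C (S m) (S k) * p ^ S k * (1 - p) ^ (m - k))
  = 1 - (1 - p) ^ S m.
Proof.
  assert (Hb := binomial p (1 - p) (S m)).
  rewrite <- sumR_sum_f_R0, sumR_succ_l in Hb.
  replace (p + (1 - p)) with 1 in Hb by ring.
  rewrite pow1, C_n_0, Nat.sub_0_r in Hb. simpl (p ^ 0) in Hb.
  change (S m - S ?k)%nat with (m - k)%nat in Hb.
  lra.
Qed.

(* [C(m, k) / (k + 1) = C(m + 1, k + 1) / (m + 1)] turns the sum into a binomial expansion. *)
Lemma binomial_div_succ_sum m p :
  INR (S m) * sumR (S m) (fun k => Binomial.C m k * p ^ k * (1 - p) ^ (m - k) / INR (k + 1))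
  = geom_sum (S m) p.
Proof.
  destruct (Req_dec p 0) as [->|Hp].
  - rewrite geom_sum_0, sumR_succ_l, (sumR_ext m _ (fun _ => 0)), sumR_const.
    + rewrite C_n_0, Nat.sub_0_r, Rminus_0_r, pow1. simpl. field.
    + intros k _. rewrite pow_i by lia. unfold Rdiv. ring.
  - apply (Rmult_eq_reg_l p); [|exact Hp].
    rewrite geom_sum_mul, <- binomial_succ_tail, <- !sumR_scal_l.
    apply sumR_ext. intros k Hk.
    rewrite <- C_succ_succ by lia. replace (k + 1)%nat with (S k) by lia.
    assert (INR (S k) <> 0) by (apply not_0_INR; lia).
    simpl (p ^ S k). field. assumption.
Qed.

Lemma Phi_geom_sum n F c q :
  (1 <= n)%nat -> Phi n F c q = q * geom_sum n (q * F c) / INR n.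
Proof.
  intros Hn. destruct n as [|m]; [lia|].
  rewrite <- binomial_div_succ_sum. unfold Phi. cbv zeta.
  simpl (S m - 1)%nat. rewrite Nat.sub_0_r.
  field. apply not_0_INR. lia.
Qed.

Lemma Pfind_Phi n F c q :
  (1 <= n)%nat -> Pfind n F c q = INR n * F c * Phi n F c q.
Proof.
  intros Hn. rewrite Phi_geom_sum by exact Hn. unfold Pfind. rewrite <- geom_sum_mul.
  field. apply not_0_INR. lia.
Qed.

Section PhiProperties.

Variables (n : nat) (F : R -> R).
Hypothesis Hn : (1 <= n)%nat.
Hypothesis HF01 : forall x, 0 <= F x <= 1.
Hypothesis HFincr : forall x y, x <= y -> F x <= F y.

Lemma Phi_nonneg c q : 0 <= q <= 1 -> 0 <= Phi n F c q.
Proof.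
  intros Hq. rewrite Phi_geom_sum by exact Hn.
  assert (0 < INR n) by (apply lt_0_INR; lia).
  pose proof (HF01 c).
  assert (1 <= geom_sum n (q * F c)) by (apply geom_sum_ge1; [exact Hn|split; nra]).
  apply Rdiv_le_0_compat; nra.
Qed.

Lemma Phi_decreasing q : 0 <= q <= 1 -> decreasing (fun c => Phi n F c q).
Proof.
  intros Hq c1 c2 Hc. rewrite !Phi_geom_sum by exact Hn.
  assert (0 < INR n) by (apply lt_0_INR; lia).
  pose proof (HF01 c1). pose proof (HF01 c2). pose proof (HFincr c1 c2 Hc).
  assert (geom_sum n (q * F c2) <= geom_sum n (q * F c1)) by (apply geom_sum_decr; nra).
  unfold Rdiv. apply Rmult_le_compat_r; [left; apply Rinv_0_lt_compat; lra|nra].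
Qed.

(* [n F(c) Phi(c; q) = 1 - (1 - q F(c))^n] is increasing in [q]. *)
Lemma Phi_le_Phi1 c q : 0 <= q <= 1 -> Phi n F c q <= Phi n F c 1.
Proof.
  intros Hq. rewrite !Phi_geom_sum by exact Hn. rewrite !Rmult_1_l.
  assert (0 < INR n) by (apply lt_0_INR; lia).
  pose proof (HF01 c).
  unfold Rdiv. apply Rmult_le_compat_r; [left; apply Rinv_0_lt_compat; lra|].
  destruct (Req_dec (F c) 0) as [HF0|HF0].
  - rewrite HF0, Rmult_0_r. assert (1 <= geom_sum n 0) by (apply geom_sum_ge1; [exact Hn|lra]). nra.
  - apply (Rmult_le_reg_l (F c)); [lra|].
    replace (F c * (q * geom_sum n (q * F c))) with (q * F c * geom_sum n (q * F c)) by ring.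
    rewrite !geom_sum_mul.
    assert ((1 - F c) ^ n <= (1 - q * F c) ^ n) by (apply pow_incr; nra).
    lra.
Qed.

Lemma Phi1_pos c : 0 < Phi n F c 1.
Proof.
  rewrite Phi_geom_sum by exact Hn.
  assert (0 < INR n) by (apply lt_0_INR; lia).
  assert (1 <= geom_sum n (1 * F c)) by (apply geom_sum_ge1; [exact Hn|specialize (HF01 c); lra]).
  apply Rdiv_lt_0_compat; lra.
Qed.

End PhiProperties.

Lemma continuity_sumR m (g : nat -> R -> R) :
  (forall k, continuity (g k)) -> continuity (fun c => sumR m (fun k => g k c)).
Proof.
  intros Hg. induction m as [|m IH]; cbn [sumR].
  - apply continuity_const. intros x y. reflexivity.
  - apply (continuity_plus (fun c => sumR m (fun k => g k c)) (g m)); auto.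
Qed.

Lemma continuity_pow h j : continuity h -> continuity (fun c => h c ^ j).
Proof.
  intros Hh. induction j as [|j IH]; cbn [pow].
  - apply continuity_const. intros x y. reflexivity.
  - apply (continuity_mult h (fun c => h c ^ j)); auto.
Qed.

Lemma Phi_continuity n F q :
  (1 <= n)%nat -> continuity F -> continuity (fun c => Phi n F c q).
Proof.
  intros Hn HF x.
  apply (continuity_pt_ext (fun c => q / INR n * geom_sum n (q * F c))).
  { intros c. rewrite Phi_geom_sum by exact Hn. unfold Rdiv. ring. }
  apply (continuity_scal (fun c => geom_sum n (q * F c))).
  apply (continuity_sumR n (fun j c => (1 - q * F c) ^ j)). intros j.
  apply (continuity_pow (fun c => 1 - q * F c)).
  apply (continuity_minus (fun _ => 1) (fun c => q * F c)).
  - apply continuity_const. intros a b. reflexivity.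
  - apply (continuity_scal F). exact HF.
Qed.

Lemma fixpoint_between (Ps : R -> R) x y :
  continuity Ps -> x < y -> x < Ps x -> Ps y < y -> exists z, x < z < y /\ Ps z = z.
Proof.
  intros Hc Hxy Hx Hy.
  destruct (IVT (fun c => c - Ps c) x y) as [z [[Hz1 Hz2] Hz]]; [|exact Hxy|lra|lra|].
  - apply (continuity_minus (fun c => c) Ps); [apply derivable_continuous, derivable_id|exact Hc].
  - exists z. assert (z <> x) by (intros ->; lra). assert (z <> y) by (intros ->; lra). lra.
Qed.

Section Threshold.

Variables (cl ch : Rbar) (Ps : R -> R).
Hypothesis Ps_decr : decreasing Ps.

Lemma decreasing_fixpoint_unique c1 c2 : Ps c1 = c1 -> Ps c2 = c2 -> c1 = c2.
Proof.
  intros E1 E2. destruct (Rle_dec c1 c2) as [H|H].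
  - pose proof (Ps_decr _ _ H). lra.
  - assert (H' : c2 <= c1) by lra. pose proof (Ps_decr _ _ H'). lra.
Qed.

Lemma threshold_unique c1 c2 :
  is_threshold cl ch Ps c1 -> is_threshold cl ch Ps c2 -> c1 = c2.
Proof.
  unfold is_threshold.
  intros [[E1 H1]|[[N1 [E1 H1]]|[N1 [M1 [_ [_ H1]]]]]]
         [[E2 H2]|[[N2 [E2 H2]]|[N2 [M2 [_ [_ H2]]]]]];
    try congruence;
    try (exfalso; match goal with N : ~ _ |- _ => apply N; eexists; split; eassumption end).
  apply decreasing_fixpoint_unique; assumption.
Qed.

Lemma threshold_transfer (Ps0 : R -> R) c :
  Rbar_lt cl ch -> Ps c = Ps0 c -> is_threshold cl ch Ps0 c -> is_threshold cl ch Ps c.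
Proof.
  intros Hlt E. unfold is_threshold. rewrite <- E.
  assert (NL : c <= Ps c -> Rbar_lt cl c -> ~ (exists a, cl = Finite a /\ Ps a <= a)).
  { intros Hc Hcl [a [-> Ha]]. simpl in Hcl. pose proof (Ps_decr a c ltac:(lra)). lra. }
  assert (NH : Ps c <= c -> Rbar_lt c ch -> ~ (exists b, ch = Finite b /\ b <= Ps b)).
  { intros Hc Hch [b [-> Hb]]. simpl in Hch. pose proof (Ps_decr c b ltac:(lra)). lra. }
  intros [H|[[_ [Ech Hc]]|[_ [_ [Hcl [Hch Hc]]]]]].
  - left. exact H.
  - right; left. split; [|split; assumption].
    apply NL; [exact Hc|]. rewrite <- Ech. exact Hlt.
  - right; right. repeat split; try assumption.
    + apply NL; [lra|exact Hcl].
    + apply NH; [lra|exact Hch].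
Qed.

Lemma threshold_exists :
  Rbar_lt cl ch -> Rbar_lt 0 ch -> (forall x, 0 <= Ps x) -> continuity Ps ->
  exists c, is_threshold cl ch Ps c.
Proof.
  intros Hlt Hch Hpos Hc. unfold is_threshold.
  destruct (classic (exists a, cl = Finite a /\ Ps a <= a)) as [[a Ha]|NL]; [eauto|].
  destruct (classic (exists b, ch = Finite b /\ b <= Ps b)) as [[b Hb]|NH]; [exists b; tauto|].
  assert (Hx : exists x : R, Rbar_le cl x /\ Rbar_lt x ch /\ x < Ps x).
  { destruct cl as [a| |]; simpl in Hlt.
    - exists a. repeat split; [simpl; lra|exact Hlt|].
      destruct (Rlt_le_dec a (Ps a)) as [H|H]; [exact H|exfalso; eauto].
    - destruct ch; contradiction.
    - exists (-1). pose proof (Hpos (-1)).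
      split; [exact I|split; [|lra]].
      destruct ch; simpl in *; [lra|exact I|contradiction]. }
  destruct Hx as (x & Hclx & Hxch & Hx).
  assert (Hy : exists y : R, x < y /\ Rbar_le y ch /\ Ps y < y).
  { destruct ch as [b| |]; simpl in Hxch.
    - exists b. repeat split; [lra|simpl; lra|].
      destruct (Rlt_le_dec (Ps b) b) as [H|H]; [exact H|exfalso; eauto].
    - set (y := Rmax (x + 1) (Ps x + 1)).
      assert (x + 1 <= y) by apply Rmax_l. assert (Ps x + 1 <= y) by apply Rmax_r.
      pose proof (Ps_decr x y ltac:(lra)).
      exists y. split; [lra|split; [exact I|lra]].
    - contradiction. }
  destruct Hy as (y & Hxy & Hych & Hy).
  destruct (fixpoint_between Ps x y Hc Hxy Hx Hy) as (z & Hz & Ez).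
  exists z. right; right. repeat split.
  - intros [a [-> Ha]]. simpl in Hclx. pose proof (Ps_decr a z ltac:(lra)). lra.
  - intros [b [-> Hb]]. simpl in Hych. pose proof (Ps_decr z b ltac:(lra)). lra.
  - apply (Rbar_le_lt_trans _ x); [exact Hclx|simpl; lra].
  - apply (Rbar_lt_le_trans _ y); [simpl; lra|exact Hych].
  - exact Ez.
Qed.

Lemma epsilon_threshold c :
  is_threshold cl ch Ps c -> epsilon (inhabits 0) (is_threshold cl ch Ps) = c.
Proof.
  intros Hc. apply threshold_unique; [apply epsilon_spec; eauto|exact Hc].
Qed.

End Threshold.

Definition artificial_Psi (n K : nat) (F : R -> R) (va qa : nat -> R) (c : R) : R :=
  sumR K (fun k => va k * Phi n F c (qa k)).

Lemma artificial_Psi_first_only n K F s c :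
  (1 <= K)%nat -> artificial_Psi n K F (first_only s) (fun _ => 1) c = s * Phi n F c 1.
Proof. apply sumR_first_only_mul. Qed.

Lemma artificial_cost n K F va qa c :
  (1 <= n)%nat ->
  sumR K (fun k => va k * Pfind n F c (qa k)) = INR n * F c * artificial_Psi n K F va qa c.
Proof.
  intros Hn. unfold artificial_Psi. rewrite <- sumR_scal_l.
  apply sumR_ext. intros k _. rewrite Pfind_Phi by exact Hn. ring.
Qed.

Section PsiProperties.

Variables (n L K : nat) (F : R -> R) (mu q v va qa : nat -> R).
Hypothesis Hn : (1 <= n)%nat.
Hypothesis HF01 : forall x, 0 <= F x <= 1.
Hypothesis HFincr : forall x y, x <= y -> F x <= F y.
Hypothesis Horganic : forall l, (l < L)%nat -> 0 <= v l /\ 0 <= mu l /\ 0 <= q l <= 1.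
Hypothesis Hartificial : forall k, (k < K)%nat -> 0 <= va k /\ 0 <= qa k <= 1.

Lemma artificial_Psi_nonneg c : 0 <= artificial_Psi n K F va qa c.
Proof.
  apply sumR_nonneg. intros k Hk. destruct (Hartificial k Hk).
  apply Rmult_le_pos; [assumption|apply Phi_nonneg; assumption].
Qed.

Lemma artificial_Psi_le c : artificial_Psi n K F va qa c <= sumR K va * Phi n F c 1.
Proof.
  rewrite Rmult_comm, <- sumR_scal_l. apply sumR_le. intros k Hk.
  destruct (Hartificial k Hk). rewrite (Rmult_comm (Phi n F c 1)).
  apply Rmult_le_compat_l; [assumption|apply Phi_le_Phi1; assumption].
Qed.

Lemma Psi_decreasing : decreasing (Psi n L K F mu q v va qa).
Proof.
  intros x y Hxy. unfold Psi. apply Rplus_le_compat; apply sumR_le.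
  - intros l Hl. destruct (Horganic l Hl) as (Hv & Hmu & Hq).
    apply Rmult_le_compat_l; [nra|apply Phi_decreasing; assumption].
  - intros k Hk. destruct (Hartificial k Hk).
    apply Rmult_le_compat_l; [assumption|apply Phi_decreasing; assumption].
Qed.

Lemma Psi_nonneg c : 0 <= Psi n L K F mu q v va qa c.
Proof.
  apply Rplus_le_le_0_compat; [|apply artificial_Psi_nonneg].
  apply sumR_nonneg. intros l Hl. destruct (Horganic l Hl) as (Hv & Hmu & Hq).
  apply Rmult_le_pos; [nra|apply Phi_nonneg; assumption].
Qed.

Lemma Psi_continuity : continuity F -> continuity (Psi n L K F mu q v va qa).
Proof.
  intros HF.
  apply (continuity_plus (fun c => sumR L (fun l => v l * mu l * Phi n F c (q l)))
                         (fun c => sumR K (fun k => va k * Phi n F c (qa k)))).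
  - apply (continuity_sumR L (fun l c => v l * mu l * Phi n F c (q l))). intros l.
    apply (continuity_scal (fun c => Phi n F c (q l))). apply Phi_continuity; assumption.
  - apply (continuity_sumR K (fun k c => va k * Phi n F c (qa k))). intros k.
    apply (continuity_scal (fun c => Phi n F c (qa k))). apply Phi_continuity; assumption.
Qed.

End PsiProperties.

Lemma cost_cdf_bounds cl ch F f : cost_cdf cl ch F f -> forall x, 0 <= F x <= 1.
Proof.
  intros (_ & _ & Hincr & _ & Hm & Hp & _) x. split.
  - apply (is_lim_le_loc F (fun _ => F x) m_infty 0 (F x)); [|exact Hm|apply is_lim_const].
    exists x. intros y Hy. apply Hincr. lra.
  - apply (is_lim_le_loc (fun _ => F x) F p_infty (F x) 1); [|apply is_lim_const|exact Hp].
    exists x. intros y Hy. apply Hincr. lra.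
Qed.

Lemma cost_cdf_incr cl ch F f : cost_cdf cl ch F f -> forall x y, x <= y -> F x <= F y.
Proof. intros (_ & _ & Hincr & _). exact Hincr. Qed.

Lemma cost_cdf_continuity cl ch F f : cost_cdf cl ch F f -> continuity F.
Proof. intros (_ & _ & _ & Hc & _) x. apply continuity_pt_filterlim, Hc. Qed.

Definition pooled_prize (n L K : nat) (cl ch : Rbar) (F : R -> R) (mu q v va qa : nat -> R) : R :=
  let c := cstar n L K cl ch F mu q v va qa in
  artificial_Psi n K F va qa c / Phi n F c 1.

Section Pooling.

Variables (n L K : nat) (cl ch : Rbar) (F f : R -> R) (mu q w : nat -> R) (vbar : R).
Hypothesis Hn : (1 <= n)%nat.
Hypothesis HK : (1 <= K)%nat.
Hypothesis HF : cost_cdf cl ch F f.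
Hypothesis Hmu_q : forall l, (l < L)%nat -> 0 <= mu l /\ 0 <= q l <= 1.

Let HF01 := cost_cdf_bounds cl ch F f HF.
Let HFincr := cost_cdf_incr cl ch F f HF.

Variables (v va qa : nat -> R).
Hypothesis Hfeas : feasible L K vbar v va qa.

Let c := cstar n L K cl ch F mu q v va qa.
Let s := pooled_prize n L K cl ch F mu q v va qa.

Let Horganic : forall l, (l < L)%nat -> 0 <= v l /\ 0 <= mu l /\ 0 <= q l <= 1.
Proof. destruct Hfeas as (_ & Hv & _). intros l Hl. split; auto. Qed.

Let Hartificial : forall k, (k < K)%nat -> 0 <= va k /\ 0 <= qa k <= 1.
Proof. destruct Hfeas as (_ & _ & H). exact H. Qed.

Lemma pooled_prize_mul : s * Phi n F c 1 = artificial_Psi n K F va qa c.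
Proof. unfold s, pooled_prize. fold c. field. apply Rgt_not_eq, Phi1_pos; assumption. Qed.

Lemma pooled_prize_nonneg : 0 <= s.
Proof.
  unfold s, pooled_prize. fold c.
  apply Rdiv_le_0_compat; [apply artificial_Psi_nonneg|apply Phi1_pos]; assumption.
Qed.

Lemma pooled_prize_le : s <= sumR K va.
Proof.
  unfold s, pooled_prize. fold c. apply Rle_div_l; [apply Phi1_pos; assumption|].
  apply artificial_Psi_le; assumption.
Qed.

Let Hpooled : forall k, (k < K)%nat -> 0 <= first_only s k /\ 0 <= 1 <= 1.
Proof.
  intros k _. pose proof pooled_prize_nonneg. unfold first_only.
  destruct (k =? 0)%nat; lra.
Qed.

Lemma feasible_pooled : feasible L K vbar v (first_only s) (fun _ => 1).
Proof.
  destruct Hfeas as (Hbudget & Hv & _). split; [|split; [exact Hv|exact Hpooled]].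
  rewrite (sumR_ext K _ (fun k => first_only s k * 1)) by (intros; ring).
  rewrite sumR_first_only_mul by exact HK.
  pose proof pooled_prize_le. lra.
Qed.

Lemma cstar_is_threshold : is_threshold cl ch (Psi n L K F mu q v va qa) c.
Proof.
  pose proof HF as (Hlt & Hch & _).
  unfold c, cstar. apply epsilon_spec, threshold_exists; try assumption.
  - apply Psi_decreasing; assumption.
  - apply Psi_nonneg; assumption.
  - apply Psi_continuity; [assumption..|exact (cost_cdf_continuity cl ch F f HF)].
Qed.

Lemma cstar_pooled : cstar n L K cl ch F mu q v (first_only s) (fun _ => 1) = c.
Proof.
  pose proof HF as (Hlt & _).
  unfold cstar at 1. apply epsilon_threshold; [apply Psi_decreasing; assumption|].
  apply (threshold_transfer _ _ _ (Psi_decreasing n L K F mu q v _ _ Hn HF01 HFincr Horganic Hpooled)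
           (Psi n L K F mu q v va qa)); [exact Hlt| |exact cstar_is_threshold].
  unfold Psi. fold (artificial_Psi n K F (first_only s) (fun _ => 1) c).
  fold (artificial_Psi n K F va qa c).
  rewrite artificial_Psi_first_only, pooled_prize_mul by exact HK. reflexivity.
Qed.

Lemma objective_pooled :
  objective n L K cl ch F mu q w v (first_only s) (fun _ => 1)
  = objective n L K cl ch F mu q w v va qa.
Proof.
  unfold objective. cbv zeta. rewrite cstar_pooled. fold c. f_equal.
  rewrite !artificial_cost, artificial_Psi_first_only, pooled_prize_mul by assumption.
  reflexivity.
Qed.

End Pooling.

Theorem lemma2 (n L K : nat) (mu q w : nat -> R) (cl ch : Rbar) (F f : R -> R)
  (vbar : R)
  (Hn : (1 <= n)%nat) (HK : (1 <= K)%nat)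
  (Hmu : forall l, (l < L)%nat -> 0 < mu l <= 1)
  (Hq : forall l, (l < L)%nat -> 0 < q l <= 1)
  (Hw : forall l, (l < L)%nat -> 0 <= w l)
  (HF : cost_cdf cl ch F f) (Hvbar : 0 < vbar)
  (v va qa : nat -> R)
  (Hsol : is_solution n L K cl ch F mu q w vbar v va qa) :
  exists v' va' qa' : nat -> R,
    is_solution n L K cl ch F mu q w vbar v' va' qa' /\
    (forall k, (1 <= k < K)%nat -> va' k = 0).
Proof.
  assert (Hmu_q : forall l, (l < L)%nat -> 0 <= mu l /\ 0 <= q l <= 1).
  { intros l Hl. specialize (Hmu l Hl). specialize (Hq l Hl). lra. }
  destruct Hsol as [Hfeas Hopt].
  exists v, (first_only (pooled_prize n L K cl ch F mu q v va qa)), (fun _ => 1).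
  split; [split|].
  - eapply feasible_pooled; eassumption.
  - intros v' va' qa' Hfeas'.
    erewrite objective_pooled by eassumption.
    exact (Hopt v' va' qa' Hfeas').
  - intros k Hk. unfold first_only. destruct k; [lia|reflexivity].
Qed.
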